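(* Assume $0<\bar p<1$ and let $\hat{\mathcal C}=\{c\in\mathcal C:\ p_c\ge\bar p\}$. Suppose further: (i) there exist probability distributions $P_0,P_1$ on $\mathcal Y$ and a map $\lambda:\mathcal C\to[0,1]$ such that for every $c\in\mathcal C$, $P_{Y\mid C=c}=P_{\lambda(c)}:=(1-\lambda(c))P_0+\lambda(c)P_1$; set $\bar\lambda=\mathbb E[\lambda(C)]$, so that $P_Y=P_{\bar\lambda}$; (ii) (monotone alignment) for all $c_1,c_2\in S:=\{c\in\hat{\mathcal C}:\lambda(c)\ge\bar\lambda\}$, $\mathrm{IG}(Z;C=c_1)\ge\mathrm{IG}(Z;C=c_2)$ implies $\lambda(c_1)\ge\lambda(c_2)$. Then for all $c_1,c_2\in S$, $$\mathrm{IG}(Z;C=c_1)\ge\mathrm{IG}(Z;C=c_2)\implies \mathrm{IG}(Y;C=c_1)\ge\mathrm{IG}(Y;C=c_2),$$ and every maximizer of $c\mapsto\mathrm{IG}(Z;C=c)$ over $S$ is a maximizer of $c\mapsto\mathrm{IG}(Y;C=c)$ over $S$, i.e. $\operatorname*{argmax}_{c\in S}\mathrm{IG}(Z;C=c)\subseteq\operatorname*{argmax}_{c\in S}\mathrm{IG}(Y;C=c)$. In particular, if $S\neq\emptyset$ and $\mathrm{IG}(Y;C=\cdot)$ has a unique maximizer over $S$, then $\operatorname*{argmax}_{c\in S}\mathrm{IG}(Z;C=c)=\operatorname*{argmax}_{c\in S}\mathrm{IG}(Y;C=c)$.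
   Context: Let $(C,Y,Z)$ be jointly distributed random variables, where $C$ takes values in a finite set $\mathcal C$ of candidate evidences with $P(C=c)>0$ for every $c\in\mathcal C$, $Y$ takes values in a finite set $\mathcal Y$, and $Z\in\{0,1\}$ (a Bernoulli ''helpfulness'' variable). Write $P_{Y\mid C=c}$, $P_Y$, $P_{Z\mid C=c}$, $P_Z$ for the conditional and marginal laws. Define $p_c=P(Z=1\mid C=c)$ and $\bar p=P(Z=1)$, so $P_{Z\mid C=c}=\mathrm{Bern}(p_c)$ and $P_Z=\mathrm{Bern}(\bar p)$. For distributions $\mu,\mu'$ on a finite set, $D_{\mathrm{KL}}(\mu\|\mu')=\sum_y\mu(y)\log\frac{\mu(y)}{\mu'(y)}\in[0,\infty]$ (with $0\log 0=0$, and value $+\infty$ if $\mu$ is not absolutely continuous w.r.t. $\mu'$). The evidence-wise information gains are $\mathrm{IG}(Y;C=c)=D_{\mathrm{KL}}(P_{Y\mid C=c}\,\|\,P_Y)$ and $\mathrm{IG}(Z;C=c)=D_{\mathrm{KL}}(P_{Z\mid C=c}\,\|\,P_Z)$. $\operatorname{argmax}$ denotes the set of maximizers. *)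

From mathcomp Require Import all_boot all_order all_algebra.
From mathcomp Require Import reals ereal exp.
Set Implicit Arguments. Unset Strict Implicit. Unset Printing Implicit Defensive.
Import Order.TTheory GRing.Theory Num.Theory.
Local Open Scope ring_scope.

Section Defs.
Variable R : realType.

Definition KL (T : finType) (mu mu' : T -> R) : \bar R :=
  if [forall y, (mu y != 0) ==> (mu' y != 0)]
  then (\sum_(y : T) (if mu y == 0 then 0 else mu y * ln (mu y / mu' y)))%:E
  else +oo%E.

(* Bernoulli law on {0,1} = bool (true = 1). *)
Definition bern (p : R) : bool -> R := fun b => if b then p else 1 - p.

Definition is_distr (T : finType) (mu : T -> R) : Prop :=
  (forall t, 0 <= mu t) /\ \sum_(t : T) mu t = 1.

Variables (C Y : finType).
Variable P : C -> Y -> bool -> R.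

Definition PC (c : C) : R := \sum_(y : Y) \sum_(z : bool) P c y z.
Definition PY (y : Y) : R := \sum_(c : C) \sum_(z : bool) P c y z.
Definition PYgC (c : C) : Y -> R := fun y => (\sum_(z : bool) P c y z) / PC c.
Definition pc (c : C) : R := (\sum_(y : Y) P c y true) / PC c.
Definition pbar : R := \sum_(c : C) \sum_(y : Y) P c y true.

Definition IGY (c : C) : \bar R := KL (PYgC c) PY.
Definition IGZ (c : C) : \bar R := KL (bern (pc c)) (bern pbar).

End Defs.

Definition mixture (R : realType) (Y : finType) (P0 P1 : Y -> R) (l : R) : Y -> R :=
  fun y => (1 - l) * P0 y + l * P1 y.

Definition argmax (R : realType) (T : Type) (S : T -> Prop) (f : T -> \bar R) : T -> Prop :=
  fun t => S t /\ forall t', S t' -> (f t' <= f t)%E.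

(* Along the segment of mixtures P_l = (1 - l) P0 + l P1, the divergence
   l |-> KL(P_l || P_m) is nondecreasing for l >= m: pointwise, P_a lies
   between P_m and P_b whenever m <= a <= b, and the convexity of x ln (x / q)
   (its tangent at P_a) together with the equal total masses of P_a and P_b
   gives KL(P_a || P_m) <= KL(P_b || P_m).  Since P_Y = P_lambar and
   P_{Y|C=c} = P_{lam c}, monotone alignment turns every comparison of
   IG(Z; C = .) on S into one of lam, hence of IG(Y; C = .). *)
From mathcomp Require Import all_boot all_order all_algebra.
From mathcomp Require Import reals ereal exp.
From mathcomp Require Import boolp ring lra.
Import Order.TTheory GRing.Theory Num.Theory.
Local Open Scope ring_scope.

Section KL_monotone.
Variable R : realType.

Lemma mul_ln_ratio_le (A B : R) : 0 < A -> 0 < B -> B * (ln A - ln B) <= A - B.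
Proof.
move=> A0 B0.
have AB0 : 0 < A / B by rewrite divr_gt0.
have ln_le : ln (A / B) <= A / B - 1.
  by have := @le_ln1Dx R (A / B - 1); rewrite subrKC; apply; lra.
have -> : A - B = B * (A / B - 1) by field; rewrite gt_eqF.
by rewrite -ln_div ?posrE // ler_pM2l.
Qed.

Definition xlnx_ratio (q x : R) : R := if x == 0 then 0 else x * ln (x / q).

(* The product hypothesis says that A lies between q and B. *)
Lemma xlnx_ratio_between (q A B : R) :
  0 <= q -> 0 <= A -> 0 <= B -> 0 <= (A - q) * (B - A) -> (q = 0 -> B = 0) ->
  xlnx_ratio q A + (B - A) <= xlnx_ratio q B.
Proof.
rewrite /xlnx_ratio => q0 A0 B0 between supp.
have [qe|qn0] := eqVneq q 0.
  have Be := supp qe.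
  have Ae : A = 0 by move: between; rewrite qe Be; nra.
  by rewrite Ae Be eqxx; lra.
have qp : 0 < q by rewrite lt_def qn0.
have [Ae|An0] := eqVneq A 0.
  have Be : B = 0 by move: between; rewrite Ae; nra.
  by rewrite Ae Be eqxx; lra.
have Ap : 0 < A by rewrite lt_def An0.
have [Be|Bn0] := eqVneq B 0.
  have Aleq : A / q <= 1.
    by rewrite ler_pdivrMr // mul1r; move: between; rewrite Be; nra.
  have := ln_le0 Aleq; rewrite Be; nra.
have Bp : 0 < B by rewrite lt_def Bn0.
rewrite !ln_div ?posrE //.
have tangent := @mul_ln_ratio_le _ _ Ap Bp.
have same_side : 0 <= (B - A) * (ln A - ln q).
  case: (ltgtP A q) => [Aq|qA|->]; last by rewrite subrr mulr0.
  - have BA : B - A <= 0 by move: between; rewrite -subr_lt0 in Aq; nra.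
    by apply: mulr_le0 => //; rewrite subr_le0 ler_ln ?posrE // ltW.
  - have BA : 0 <= B - A by move: between; rewrite -subr_gt0 in qA; nra.
    by apply: mulr_ge0 => //; rewrite subr_ge0 ler_ln ?posrE // ltW.
(* B ln (B/q) - A ln (A/q) - (B - A)
     = [B (ln B - ln A) - (B - A)] + (B - A) (ln A - ln q) *)
nra.
Qed.

Lemma KL_le_between (T : finType) (mu nu rho : T -> R) :
  (forall t, 0 <= nu t) -> (forall t, 0 <= mu t) -> (forall t, 0 <= rho t) ->
  \sum_t mu t = \sum_t rho t ->
  (forall t, 0 <= (mu t - nu t) * (rho t - mu t)) ->
  (KL mu nu <= KL rho nu)%E.
Proof.
move=> nu0 mu0 rho0 mass between; rewrite /KL.
have [/forallP rho_ac|_] := boolP [forall t, (rho t != 0) ==> (nu t != 0)];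
  last by rewrite leey.
have supp t : nu t = 0 -> rho t = 0.
  by move=> nut; move: (rho_ac t); rewrite nut eqxx implybF => /negPn/eqP.
have -> : [forall t, (mu t != 0) ==> (nu t != 0)].
  apply/forallP => t; apply/implyP; apply: contraNN => /eqP nut.
  by apply/eqP; move: (between t) (mu0 t); rewrite nut (supp t nut); nra.
rewrite lee_fin.
apply: (@le_trans _ _ (\sum_t (xlnx_ratio (nu t) (mu t) + (rho t - mu t)))).
  by rewrite big_split /= sumrB mass subrr addr0.
apply: ler_sum => t _; apply: xlnx_ratio_between => //; exact: supp.
Qed.

Lemma KL_mixture_mono (Y : finType) (P0 P1 : Y -> R) (m a b : R) :
  \sum_y P0 y = \sum_y P1 y -> m <= a -> a <= b ->
  (forall y, 0 <= mixture P0 P1 m y) -> (forall y, 0 <= mixture P0 P1 a y) ->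
  (forall y, 0 <= mixture P0 P1 b y) ->
  (KL (mixture P0 P1 a) (mixture P0 P1 m) <= KL (mixture P0 P1 b) (mixture P0 P1 m))%E.
Proof.
move=> mass ma ab m0 a0 b0; apply: KL_le_between => //.
  by rewrite /mixture !big_split /= -!mulr_sumr mass; ring.
move=> y; have -> : (mixture P0 P1 a y - mixture P0 P1 m y)
                     * (mixture P0 P1 b y - mixture P0 P1 a y)
    = (a - m) * (b - a) * (P1 y - P0 y) ^+ 2 by rewrite /mixture; ring.
by apply: mulr_ge0; [apply: mulr_ge0; lra | apply: sqr_ge0].
Qed.

End KL_monotone.

Section Mixture_model.
Variables (R : realType) (C Y : finType) (P : C -> Y -> bool -> R).
Hypothesis P_nonneg : forall c y z, 0 <= P c y z.
Hypothesis PC_pos : forall c, 0 < PC P c.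

Lemma PYgC_ge0 c y : 0 <= PYgC P c y.
Proof. by apply: divr_ge0; [apply: sumr_ge0 | apply: ltW]. Qed.

Lemma PY_ge0 y : 0 <= PY P y.
Proof. by rewrite sumr_ge0 // => c _; rewrite sumr_ge0. Qed.

Lemma PY_total_prob y : PY P y = \sum_c PC P c * PYgC P c y.
Proof.
by apply: eq_bigr => c _; rewrite /PYgC mulrC divfK // gt_eqF.
Qed.

Lemma PY_mixture (P0 P1 : Y -> R) (lam : C -> R) :
  \sum_c PC P c = 1 -> (forall c, PYgC P c = mixture P0 P1 (lam c)) ->
  PY P = mixture P0 P1 (\sum_c PC P c * lam c).
Proof.
move=> mass mix; apply/funext => y; rewrite PY_total_prob /mixture.
under eq_bigr => c _ do rewrite mix /mixture.
transitivity (\sum_c (PC P c * P0 y - PC P c * lam c * P0 y + PC P c * lam c * P1 y)).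
  by apply: eq_bigr => c _; ring.
by rewrite big_split /= sumrB -!mulr_suml mass; ring.
Qed.

End Mixture_model.

Section Argmax.
Variable R : realType.

Lemma argmax_sub (T : Type) (S : T -> Prop) (f g : T -> \bar R) :
  (forall t1 t2, S t1 -> S t2 -> (f t2 <= f t1)%E -> (g t2 <= g t1)%E) ->
  forall t, argmax S f t -> argmax S g t.
Proof. by move=> fg t [St ft]; split=> // t' St'; apply: fg (ft _ St'). Qed.

Lemma argmax_exists (T : finType) (S : T -> Prop) (f : T -> \bar R) :
  (exists t, S t) -> exists t, argmax S f t.
Proof.
move=> [t0 St0].
have St0b : `[< S t0 >] by apply/asboolP.
case: (@arg_maxP _ _ _ t0 (fun t => `[< S t >]) f St0b) => t /asboolP St tmax.
by exists t; split=> // t' St'; apply: tmax; apply/asboolP.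
Qed.

Lemma argmax_eq_of_unique (T : finType) (S : T -> Prop) (f g : T -> \bar R) :
  (exists t, S t) -> (forall t, argmax S f t -> argmax S g t) ->
  (exists t0, forall t, argmax S g t <-> t = t0) ->
  forall t, argmax S f t <-> argmax S g t.
Proof.
move=> Sne fg [t0 g_uniq] t; split; first exact: fg.
have [tf tf_max] := @argmax_exists _ S f Sne.
have /g_uniq tf0 := fg _ tf_max.
by move=> /g_uniq ->; rewrite -tf0.
Qed.

End Argmax.

Theorem theorem1 (R : realType) (C Y : finType) (P : C -> Y -> bool -> R)
  (P_nonneg : forall c y z, 0 <= P c y z)
  (P_sum1 : \sum_(c : C) \sum_(y : Y) \sum_(z : bool) P c y z = 1)
  (PC_pos : forall c, 0 < PC P c)
  (pbar_pos : 0 < pbar P) (pbar_lt1 : pbar P < 1)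
  (P0 P1 : Y -> R) (lam : C -> R)
  (P0_distr : is_distr P0) (P1_distr : is_distr P1)
  (lam_01 : forall c, 0 <= lam c <= 1)
  (mix : forall c, PYgC P c = mixture P0 P1 (lam c)) :
  let lambar := \sum_(c : C) PC P c * lam c in
  let S := fun c : C => pbar P <= pc P c /\ lambar <= lam c in
  (forall c1 c2, S c1 -> S c2 ->
     (IGZ P c2 <= IGZ P c1)%E -> lam c2 <= lam c1) ->
  (forall c1 c2, S c1 -> S c2 ->
     (IGZ P c2 <= IGZ P c1)%E -> (IGY P c2 <= IGY P c1)%E)
  /\ (forall c, argmax S (IGZ P) c -> argmax S (IGY P) c)
  /\ ((exists c, S c) ->
      (exists c0, forall c, argmax S (IGY P) c <-> c = c0) ->
      forall c, argmax S (IGZ P) c <-> argmax S (IGY P) c).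
Proof.
move=> lambar S align.
have PY_mix : PY P = mixture P0 P1 lambar by apply: PY_mixture.
have IGY_mono c1 c2 : S c1 -> S c2 ->
    (IGZ P c2 <= IGZ P c1)%E -> (IGY P c2 <= IGY P c1)%E.
  move=> S1 S2 /(align _ _ S1 S2) lam21; rewrite /IGY !mix PY_mix.
  apply: KL_mixture_mono => [|||y|y|y]; rewrite -?PY_mix -?mix.
  - by rewrite P0_distr.2 P1_distr.2.
  - exact: S2.2.
  - exact: lam21.
  - exact: PY_ge0.
  - exact: PYgC_ge0.
  - exact: PYgC_ge0.
have IG_argmax := @argmax_sub _ _ S _ _ IGY_mono.
by split=> //; split=> // Sne; apply: argmax_eq_of_unique.
Qed.
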